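(* The map sending a smooth extremal assignment $Z$ of order $n$ to the hypergraph on vertex set $[n]$ with edge set $\{[n]\setminus B: B \text{ a maximal element of } \mathcal{C}_Z\}$ is a bijection from the set of smooth extremal assignments of order $n$ onto the set of simple intersecting families of order $n$, rank $\le n-2$ and antirank $\ge 2$. Here $\mathcal{C}_Z=\{\ell(v): G\in S_2(n),\ v\in Z(G)\}$.
   Context: $[n]=\{1,\dots,n\}$. A stable $n$-labeled tree is a finite tree with $n$ leaves labeled bijectively by $[n]$, all internal vertices of degree $\ge 3$; $V(G)$ its internal vertices; $S(n)$ the set of such trees up to label-preserving isomorphism and $S_2(n)$ those with exactly 2 internal vertices. $\ell(v)$ is the set of labels of leaves adjacent to $v$. $G\rightsquigarrow G'$: $G'$ obtained by collapsing connected sets of internal vertices, inducing surjection $\pi:V(G)\to V(G')$; $v\rightsquigarrow v'$ means $\pi(v)=v'$. An extremal assignment of order $n$: rule $Z(G)\subset V(G)$ for $G\in S(n)$ with (a) $Z(G)\ne V(G)$, (b) if $G\rightsquigarrow G'$ and $\pi^{-1}(v')=\{v_1,\dots,v_k\}$ then $v'\in Z(G')\iff v_1,\dots,v_k\in Z(G)$. $Z$ is smooth if for every $G$ and $v\in Z(G)$ there exist $G'\in S_2(n)$, $v'\in Z(G')$ with $G\rightsquigarrow G'$, $v\rightsquigarrow v'$. A simple intersecting family of order $n$, rank $\le n-2$, antirank $\ge2$ is a collection $\{A_i\}$ of subsets of $[n]$ with $2\le|A_i|\le n-2$ for all $i$, $A_i\subset A_j\Rightarrow i=j$, and $A_i\cap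 A_j\ne\emptyset$ for all $i,j$. *)

From mathcomp Require Import all_boot.
Set Implicit Arguments. Unset Strict Implicit. Unset Printing Implicit Defensive.

(* A stable n-labeled tree, given concretely: internal vertices are 'I_nv,
   sadj is the adjacency between internal vertices, leaf i (labelled i) is
   adjacent to the internal vertex sleaf i.  The whole graph is a tree:
   the internal graph is connected and every internal edge is a bridge
   (removing it disconnects its endpoints); leaves are pendant. *)
Record stree (n : nat) := STree {
  nv : nat;
  sadj : rel 'I_nv;
  sleaf : 'I_n -> 'I_nv;
  sadj_sym : symmetric sadj;
  sadj_irr : irreflexive sadj;
  sconn : forall x y : 'I_nv, connect sadj x y;
  sbridge : forall x y : 'I_nv, sadj x y ->
     ~~ connect (fun a b => [&& sadj a b, (a, b) != (x, y) & (a, b) != (y, x)]) x y;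
  sdeg : forall v : 'I_nv, 3 <= #|[set w | sadj v w]| + #|[set i | sleaf i == v]|
}.

Definition ell n (G : stree n) (v : 'I_(nv G)) : {set 'I_n} :=
  [set i | @sleaf n G i == v].

(* G ~> G' via pi : V(G) -> V(G') obtained by collapsing the (connected)
   fibres of pi. *)
Definition contracts n (G G' : stree n) (pi : 'I_(nv G) -> 'I_(nv G')) : Prop :=
  [/\ (forall v' : 'I_(nv G'), exists v, pi v = v'),
      (forall i, @sleaf n G' i = pi (@sleaf n G i)),
      (forall (v' : 'I_(nv G')) (x y : 'I_(nv G)), pi x = v' -> pi y = v' ->
          connect (fun a b => [&& @sadj n G a b, pi a == v' & pi b == v']) x y) &
      (forall a b : 'I_(nv G'), @sadj n G' a b <->
          (a != b /\ exists x y, [/\ @sadj n G x y, pi x = a & pi y = b]))].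

Definition assignment n := forall G : stree n, {set 'I_(nv G)}.

Definition extremal n (Z : assignment n) : Prop :=
  (forall G : stree n, Z G != [set: 'I_(nv G)]) /\
  (forall (G G' : stree n) (pi : 'I_(nv G) -> 'I_(nv G')), contracts pi ->
     forall v' : 'I_(nv G'), v' \in Z G' <-> (forall v, pi v = v' -> v \in Z G)).

Definition smooth n (Z : assignment n) : Prop :=
  forall (G : stree n) (v : 'I_(nv G)), v \in Z G ->
    exists (G' : stree n) (pi : 'I_(nv G) -> 'I_(nv G')),
      [/\ nv G' = 2, contracts pi & pi v \in Z G'].

Definition inCZ n (Z : assignment n) (A : {set 'I_n}) : Prop :=
  exists G : stree n, nv G = 2 /\ exists v, v \in Z G /\ A = ell v.

Definition maxCZ n (Z : assignment n) (B : {set 'I_n}) : Prop :=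
  inCZ Z B /\ (forall C, inCZ Z C -> B \subset C -> C = B).

Definition hyp n (Z : assignment n) (A : {set 'I_n}) : Prop :=
  exists B, maxCZ Z B /\ A = ~: B.

Definition simple_intersecting n (F : {set {set 'I_n}}) : Prop :=
  [/\ (forall A, A \in F -> 2 <= #|A| <= n - 2),
      (forall A B, A \in F -> B \in F -> A \subset B -> A = B) &
      (forall A B, A \in F -> B \in F -> A :&: B != set0)].

(* Write C_Z for the leaf splits [ell v] with [v] in [Z G] and [G] a two-vertex
   tree.  Extremality alone makes C_Z closed under shrinking a split to any
   subset of size at least two (contract a three-vertex path in two ways) and
   free of complementary pairs, so the complements of its maximal elements form a
   simple intersecting family.  Smoothness recovers [Z] from C_Z, and C_Z is
   recovered from its maximal elements, which gives injectivity.  Conversely a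
   family [F] defines [ZF F], marking [v] when some member of [F] lies in a single
   branch at [v].  As [F] is intersecting, stepping from a marked vertex towards the
   branch of its witness lands on a vertex whose witness branch is strictly
   smaller; this descent yields both axioms of an extremal assignment, and
   contracting the edge towards the witness yields smoothness. *)

From mathcomp Require Import all_boot.
From Stdlib Require Import Classical ClassicalEpsilon Lia.
From mathcomp Require Import zify.
Set Implicit Arguments. Unset Strict Implicit. Unset Printing Implicit Defensive.

Section ConnectFacts.
Variable T : finType.
Implicit Types (e : rel T) (P : pred T).

Lemma connect_stable e P a b :
  (forall x y, e x y -> P x -> P y) -> connect e a b -> P a -> P b.
Proof.
move=> eP /connectP [p pth ->]; elim: p a pth => [|c p IH] a //= /andP [eac pth] Pa.
exact: IH pth (eP _ _ eac Pa).
Qed.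

Lemma connect_restrict e P a b : (forall z, connect e a z -> P z) ->
  connect e a b -> connect [rel x y | [&& e x y, P x & P y]] a b.
Proof.
move=> Preach /connectP [p pth ->].
elim: p a pth Preach => [|c p IH] a /=; first by rewrite connect0.
case/andP=> eac pth Preach; apply: (connect_trans (y := c)).
  by apply: connect1; rewrite /= eac !Preach ?connect0 ?connect1.
by apply: IH => // z czz; apply: Preach; exact: connect_trans (connect1 eac) czz.
Qed.

Lemma restrict_sym e P : symmetric e -> symmetric [rel x y | [&& e x y, P x & P y]].
Proof. by move=> esym x y; rewrite /= esym; case: (P x); case: (P y); rewrite ?andbF. Qed.

Lemma subrel_connect e e' a b : subrel e e' -> connect e a b -> connect e' a b.
Proof. by move=> ee'; apply: connect_sub => x y /ee' /connect1. Qed.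

Definition avoidr e (v : T) : rel T := [rel a b | [&& e a b, a != v & b != v]].

Lemma connect_first_step e adj v w : subrel e adj -> connect e v w -> w != v ->
  exists u, e v u /\ connect (avoidr adj v) u w.
Proof.
move=> eadj /connectP [p /shortenP [[|u q] pth uniq_vuq _] ->] /=; first by rewrite eqxx.
case/andP: pth => vu pth _; exists u; split => //; apply/connectP; exists q => //.
move: uniq_vuq; rewrite /= inE negb_or => /andP [/andP [vu' vq] _].
apply: (sub_in_path (P := predC1 v)) (sub_path eadj pth).
  by move=> a b /[!inE] av bv ab; rewrite /avoidr /= ab av bv.
by apply/allP => z; rewrite /= !inE => /predU1P [->|zq]; [rewrite eq_sym | apply: contraNneq vq => <-].
Qed.

End ConnectFacts.

Lemma connect_image (T T' : finType) (f : T -> T') (e : rel T) (e' : rel T') a b :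
  (forall p q, e p q -> f p = f q \/ e' (f p) (f q)) ->
  connect e a b -> connect e' (f a) (f b).
Proof.
move=> fe /connectP [p pth ->]; elim: p a pth => [|c p IH] a /=; first by rewrite connect0.
case/andP=> eac pth; apply: connect_trans (IH _ pth).
by case: (fe _ _ eac) => [->|h]; [exact: connect0 | exact: connect1].
Qed.

Definition branch n (G : stree n) (v x : 'I_(nv G)) : {set 'I_(nv G)} :=
  [set z | connect (avoidr (@sadj n G) v) x z].

Definition one_branch n (G : stree n) (v : 'I_(nv G)) (A : {set 'I_n}) : bool :=
  [forall i in A, @sleaf n G i != v] &&
  [forall i in A, forall j in A,
     connect (avoidr (@sadj n G) v) (@sleaf n G i) (@sleaf n G j)].

Section Branches.
Variables (n : nat) (G : stree n).
Local Notation V := ('I_(nv G)).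
Local Notation adj := (@sadj n G).
Local Notation lf := (@sleaf n G).
Local Notation av := (avoidr adj).

Lemma adjC (a b : V) : adj a b = adj b a.
Proof. exact: (@sadj_sym n G). Qed.

Lemma adjxx (a : V) : adj a a = false.
Proof. exact: (@sadj_irr n G). Qed.

Lemma adj_neq (a b : V) : adj a b -> a != b.
Proof. by apply: contraTneq => ->; rewrite adjxx. Qed.

Lemma avoidrC (v : V) : symmetric (av v).
Proof. exact: restrict_sym adjC. Qed.

Lemma connect_avoidrC (v a b : V) : connect (av v) a b = connect (av v) b a.
Proof. exact: (sym_connect_sym (avoidrC v)). Qed.

Lemma connect_avoidr_from (v z : V) : connect (av v) v z -> z = v.
Proof. by move/connectP=> [[|c p] /= pth ->] //; move: pth; rewrite /avoidr /= eqxx andbF. Qed.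

Lemma connect_avoidr_to (v z : V) : connect (av v) z v -> z = v.
Proof. by rewrite connect_avoidrC => /connect_avoidr_from. Qed.

Lemma eq_branch (v a b : V) : connect (av v) a b -> branch v a = branch v b.
Proof.
move=> ab; apply/setP=> z; rewrite !inE; apply/idP/idP; last exact: connect_trans.
by apply: connect_trans; rewrite connect_avoidrC.
Qed.

Lemma branch_id (v x : V) : x \in branch v x.
Proof. by rewrite inE connect0. Qed.

Lemma notin_branch_center (v x : V) : v \in branch v x -> x = v.
Proof. by rewrite inE => /connect_avoidr_to. Qed.

Lemma center_notin_branch (v x : V) : adj v x -> v \notin branch v x.
Proof. by move=> vx; apply/negP => /notin_branch_center xv; rewrite xv adjxx in vx. Qed.

Lemma branch_across_edge (u v z : V) :
  adj u v -> z \in branch v u -> z \notin branch u v.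
Proof.
rewrite !inE => huv h1; apply/negP => h2.
apply: (negP (@sbridge n G u v huv)); apply: (connect_trans (y := z)).
  apply: subrel_connect h1 => a b /and3P [hab hav hbv].
  by rewrite /= hab !xpair_eqE !negb_and hbv hav !orbT.
rewrite connect_avoidrC in h2; apply: subrel_connect h2 => a b /and3P [hab hau hbu].
by rewrite /= hab !xpair_eqE !negb_and hbu hau !orbT.
Qed.

Lemma sub_branch (u x v : V) :
  adj u x -> u != v -> v \notin branch u x -> branch u x \subset branch v u.
Proof.
move=> hux huv hv; apply/subsetP=> z; rewrite !inE => hz.
have hxv : x != v by apply: contraNneq hv => <-; exact: branch_id.
apply: (connect_trans (y := x)); first by apply: connect1; rewrite /avoidr /= hux huv hxv.
have notv w : connect (av u) x w -> w != v.
  by move=> hw; apply: contraNneq hv => <-; rewrite inE.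
apply: subrel_connect (connect_restrict notv hz) => a b /and3P [/and3P [hab _ _] ha hb].
by rewrite /avoidr /= hab ha hb.
Qed.

Lemma branch_nbr (v z : V) : z != v -> exists u, adj v u /\ z \in branch v u.
Proof.
move=> hz; have [u [vu uz]] := connect_first_step (fun a b h => h) (@sconn n G v z) hz.
by exists u; rewrite inE.
Qed.

Lemma nbr_notin_branch (v x y : V) : adj v x -> adj v y -> y != x -> x \notin branch v y.
Proof.
move=> vx vy yx; apply/negP; rewrite inE => /eq_branch yx_branch.
have y_in : y \in branch v x by rewrite -yx_branch branch_id.
apply: (negP (branch_across_edge _ y_in)); first by rewrite adjC.
by rewrite inE; apply: connect1; rewrite /avoidr /= vy yx (adj_neq vx).
Qed.

(* Descend through a second neighbour of [v], which exists by stability, until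
   some vertex carries two leaves itself. *)
Lemma branch_leaves_ge2 (v x : V) : adj v x -> 2 <= #|[set i | lf i \in branch x v]|.
Proof.
move: {2}#|branch x v| (leqnn #|branch x v|) => k; elim: k v x => [|k IH] v x hk hvx.
  by move: hk; rewrite leqn0 cards_eq0 => /eqP h; move: (branch_id x v); rewrite h inE.
have [hl|hl] := leqP 2 #|[set i | lf i == v]|.
  by apply: leq_trans hl (subset_leq_card _); apply/subsetP => i; rewrite !inE => /eqP ->.
have [y /andP [hvy hyx]] : exists y, adj v y && (y != x).
  apply/existsP; apply: contraLR (@sdeg n G v); rewrite negb_exists -ltnNge => /forallP H.
  have : #|[set w | adj v w]| <= 1.
    rewrite -(cards1 x); apply: subset_leq_card; apply/subsetP => w; rewrite !inE.
    by move=> hw; move: (H w); rewrite hw /= negbK.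
  by lia.
have sub := sub_branch hvy (adj_neq hvx) (nbr_notin_branch hvx hvy hyx).
have hprop : branch v y \proper branch x v.
  by apply/properP; split => //; exists v; rewrite ?branch_id ?center_notin_branch.
have := IH y v _ _; rewrite adjC => /(_ (leq_trans (proper_card hprop) hk) hvy).
move/leq_trans; apply; apply: subset_leq_card; apply/subsetP => i; rewrite !inE.
by move=> hi; have := subsetP sub (lf i); rewrite !inE; apply.
Qed.

Lemma one_branchP (v : V) (A : {set 'I_n}) :
  reflect ((forall i, i \in A -> lf i != v) /\
           (forall i j, i \in A -> j \in A -> connect (av v) (lf i) (lf j)))
          (one_branch v A).
Proof.
apply: (iffP andP) => [[/forallP h1 /forallP h2]|[h1 h2]]; split.
- by move=> i hi; move: (h1 i); rewrite hi.
- by move=> i j hi hj; move: (h2 i); rewrite hi => /forallP /(_ j); rewrite hj.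
- by apply/forallP => i; apply/implyP; exact: h1.
by apply/forallP => i; apply/implyP => hi; apply/forallP => j; apply/implyP; exact: h2.
Qed.

End Branches.

Section Escape.
Variables (n : nat) (G : stree n) (F : {set {set 'I_n}}).
Hypothesis F_meet : forall A B, A \in F -> B \in F -> A :&: B != set0.
Local Notation V := ('I_(nv G)).
Local Notation adj := (@sadj n G).
Local Notation lf := (@sleaf n G).

Lemma intersecting_nonempty (A : {set 'I_n}) : A \in F -> exists i, i \in A.
Proof. by move=> hA; have := F_meet hA hA; rewrite setIid => /set0Pn. Qed.

(* As [A] and [A'] meet, the branch of [A'] at [u] cannot contain [v]. *)
Lemma branch_step (v u : V) (A A' : {set 'I_n}) i i' :
  A \in F -> A' \in F -> one_branch v A -> one_branch u A' -> i \in A -> i' \in A' ->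
  adj v u -> u \in branch v (lf i) -> branch u (lf i') \proper branch v (lf i).
Proof.
move=> hA hA' /one_branchP [_ hs] /one_branchP [hs1' hs2'] hi hi' hvu.
rewrite inE => /eq_branch bvu; rewrite bvu.
have [x [hux hxin]] := branch_nbr (hs1' i' hi').
have -> : branch u (lf i') = branch u x by apply/esym/eq_branch; rewrite -inE.
have hvx : v \notin branch u x.
  apply/negP; rewrite inE => /eq_branch bux.
  have /set0Pn [m] := F_meet hA hA'; rewrite inE => /andP [hmA hmA'].
  have hmv : lf m \in branch v u by rewrite -bvu inE hs.
  apply: (negP (branch_across_edge _ hmv)); first by rewrite adjC.
  rewrite -bux inE; apply: connect_trans (hs2' i' m hi' hmA').
  by rewrite -inE.
apply/properP; split; first by apply: (sub_branch hux) hvx; rewrite eq_sym adj_neq.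
by exists u; rewrite ?branch_id ?center_notin_branch.
Qed.

(* Descent along [T]: each step strictly shrinks the branch of the witness. *)
Lemma escaping_witness (T : pred V) :
  (forall a b, T a -> T b -> connect [rel x y | [&& adj x y, T x & T y]] a b) ->
  (forall v, T v -> exists2 A, A \in F & one_branch v A) ->
  forall v0, T v0 -> exists v A, [/\ T v, A \in F, one_branch v A &
     forall i z, i \in A -> z \in branch v (lf i) -> ~~ T z].
Proof.
move=> Tconn Twit v0 Tv0; have [A0 hA0 hs0] := Twit v0 Tv0.
have [i0 hi0] := intersecting_nonempty hA0.
move: {2}#|branch v0 (lf i0)| (leqnn #|branch v0 (lf i0)|) => k.
elim: k v0 A0 i0 Tv0 hA0 hs0 hi0 => [|k IH] v A i Tv hA hs hi hk.
  by move: hk; rewrite leqn0 cards_eq0 => /eqP h; move: (branch_id v (lf i)); rewrite h inE.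
case: (boolP [exists j in A, exists z in branch v (lf j), T z]); last first.
  move=> none; exists v, A; split=> // j z hj hz; apply: contra none => Tz.
  by apply/existsP; exists j; rewrite hj; apply/existsP; exists z; rewrite hz.
case/existsP => j /andP [hj /existsP [z /andP [hz Tz]]].
have /one_branchP [hs1 hs2] := hs.
rewrite -(eq_branch (hs2 i j hi hj)) in hz.
have hzv : z != v.
  by apply: contraTneq hz => ->; apply/negP => /notin_branch_center /eqP; apply/negP/hs1.
have T_adj : subrel [rel x y | [&& adj x y, T x & T y]] adj by move=> a b /and3P [].
have [u [/and3P [hvu _ Tu] huz]] := connect_first_step T_adj (Tconn v z Tv Tz) hzv.
have hu : u \in branch v (lf i).
  by move: hz; rewrite !inE => /connect_trans; apply; rewrite connect_avoidrC.
have [A' hA' hs'] := Twit u Tu; have [i' hi'] := intersecting_nonempty hA'.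
apply: (IH u A' i') => //; rewrite -ltnS.
exact: leq_trans (proper_card (branch_step hA hA' hs hs' hi hi' hvu hu)) hk.
Qed.

End Escape.

Definition t0 : 'I_2 := ord0.
Definition t1 : 'I_2 := ord_max.

Lemma ord2_cases (a : 'I_2) : a = t0 \/ a = t1.
Proof. by case: a => [[|[|m]] h]; [left|right|]; try apply: val_inj. Qed.

Definition tree2_adj : rel 'I_2 := [rel a b | a != b].

Lemma tree2_adj_sym : symmetric tree2_adj.
Proof. by move=> a b; rewrite /tree2_adj /= eq_sym. Qed.

Lemma tree2_adj_irr : irreflexive tree2_adj.
Proof. by move=> a; rewrite /tree2_adj /= eqxx. Qed.

Lemma tree2_conn (x y : 'I_2) : connect tree2_adj x y.
Proof. by case: (eqVneq x y) => [->|h]; [exact: connect0 | exact: connect1]. Qed.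

Lemma tree2_bridge (x y : 'I_2) : tree2_adj x y ->
  ~~ connect (fun a b => [&& tree2_adj a b, (a, b) != (x, y) & (a, b) != (y, x)]) x y.
Proof.
move=> hxy; apply/negP => hc.
have no_edge a b : [&& tree2_adj a b, (a, b) != (x, y) & (a, b) != (y, x)] -> False.
  move: hxy; rewrite /tree2_adj /= !xpair_eqE.
  by case: (ord2_cases a) => ->; case: (ord2_cases b) => ->; case: (ord2_cases x) => ->;
    case: (ord2_cases y) => ->.
have /eqP yx := connect_stable (P := pred1 x) (fun a b h _ => False_ind _ (no_edge a b h)) hc (eqxx x).
by move: hxy; rewrite /tree2_adj /= yx eqxx.
Qed.

Section Tree2.
Variables (n : nat) (B : {set 'I_n}).
Hypotheses (B_ge2 : 2 <= #|B|) (BC_ge2 : 2 <= #|~: B|).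

Definition tree2_leaf (i : 'I_n) : 'I_2 := if i \in B then t0 else t1.

Lemma ell_tree2_0 : [set i | tree2_leaf i == t0] = B.
Proof. by apply/setP => i; rewrite !inE /tree2_leaf; case: (i \in B). Qed.

Lemma ell_tree2_1 : [set i | tree2_leaf i == t1] = ~: B.
Proof. by apply/setP => i; rewrite !inE /tree2_leaf; case: (i \in B). Qed.

Lemma tree2_deg (v : 'I_2) : 3 <= #|[set w | tree2_adj v w]| + #|[set i | tree2_leaf i == v]|.
Proof.
have -> : [set w | tree2_adj v w] = [set~ v] by apply/setP=> w; rewrite !inE /tree2_adj /= eq_sym.
by rewrite cardsC1 card_ord add1n ltnS; case: (ord2_cases v) => ->;
  rewrite ?ell_tree2_0 ?ell_tree2_1.
Qed.

Definition tree2 : stree n :=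
  @STree n 2 tree2_adj tree2_leaf tree2_adj_sym tree2_adj_irr tree2_conn tree2_bridge tree2_deg.

End Tree2.

Section EdgeContraction.
Variables (n : nat) (G : stree n) (v x : 'I_(nv G)).
Hypothesis vx : @sadj n G v x.
Local Notation V := ('I_(nv G)).
Local Notation adj := (@sadj n G).
Local Notation lf := (@sleaf n G).
Local Notation S := (branch v x).

Definition edge_side : {set 'I_n} := [set i | lf i \in S].

Lemma edge_side_ge2 : 2 <= #|edge_side|.
Proof. by apply: branch_leaves_ge2; rewrite adjC. Qed.

Lemma edge_sideC_ge2 : 2 <= #|~: edge_side|.
Proof.
apply: leq_trans (branch_leaves_ge2 vx) (subset_leq_card _); apply/subsetP => i.
by have := branch_across_edge vx (z := lf i); rewrite /edge_side !inE.
Qed.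

Definition edge_proj (z : V) : 'I_2 := if z \in S then t0 else t1.

Lemma edge_proj_center : edge_proj v = t1.
Proof. by rewrite /edge_proj (negbTE (center_notin_branch vx)). Qed.

Lemma branch_closed (a b : V) : adj a b -> b \in S -> a != v -> a \in S.
Proof.
move=> ab bS av; have bv : b != v by apply: contraTneq bS => ->; exact: center_notin_branch.
move: bS; rewrite !inE => /connect_trans; apply; apply: connect1.
by rewrite /avoidr /= adjC ab bv av.
Qed.

Lemma connect_in_branch (z : V) : z \in S ->
  connect [rel s t | [&& adj s t, edge_proj s == t0 & edge_proj t == t0]] x z.
Proof.
rewrite inE => xz; have side w : connect (avoidr adj v) x w -> edge_proj w == t0.
  by move=> xw; rewrite /edge_proj inE xw.
apply: subrel_connect (connect_restrict side xz) => a b /and3P [/and3P [ab _ _] ha hb].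
by rewrite /= ab ha hb.
Qed.

Lemma connect_out_branch (z : V) : z \notin S ->
  connect [rel s t | [&& adj s t, edge_proj s == t1 & edge_proj t == t1]] z v.
Proof.
have /connectP [p pth vz] := @sconn n G z v.
elim: p z pth vz => [|c p IH] z /=; first by move=> _ -> _; exact: connect0.
case/andP => zc pth vc zS; case: (eqVneq z v) => [->|zv]; first exact: connect0.
have cS : c \notin S by apply: contra zS => cS; exact: branch_closed zc cS zv.
apply: connect_trans (IH c pth vc cS); apply: connect1.
by rewrite /= zc /edge_proj (negbTE zS) (negbTE cS).
Qed.

Lemma contracts_edge : @contracts n G (tree2 edge_side_ge2 edge_sideC_ge2) edge_proj.
Proof.
have px : edge_proj x = t0 by rewrite /edge_proj branch_id.
have side0 z : (edge_proj z == t0) = (z \in S) by rewrite /edge_proj; case: ifP.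
have side1 z : (edge_proj z == t1) = (z \notin S) by rewrite /edge_proj; case: ifP.
split.
- by move=> v'; case: (ord2_cases v') => ->; [exists x | exists v; exact: edge_proj_center].
- by move=> j; rewrite /= /tree2_leaf /edge_proj inE.
- move=> v' a b; case: (ord2_cases v') => -> /eqP pa /eqP pb.
    rewrite side0 in pa; rewrite side0 in pb; apply: connect_trans (connect_in_branch pb).
    by rewrite (sym_connect_sym (restrict_sym _ (@adjC n G))) connect_in_branch.
  rewrite side1 in pa; rewrite side1 in pb; apply: connect_trans (connect_out_branch pa) _.
  by rewrite (sym_connect_sym (restrict_sym _ (@adjC n G))) connect_out_branch.
- move=> a b; split; last by case.
  move=> ab; split => //.
  case: (ord2_cases a) => ea; case: (ord2_cases b) => eb; rewrite ea eb in ab *.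
  + by rewrite /= tree2_adj_irr in ab.
  + by exists x, v; rewrite adjC vx px edge_proj_center.
  + by exists v, x; rewrite vx px edge_proj_center.
  + by rewrite /= tree2_adj_irr in ab.
Qed.

End EdgeContraction.

Section ContractionPaths.
Variables (n : nat) (G G' : stree n) (pi : 'I_(nv G) -> 'I_(nv G')).
Hypothesis pi_contr : contracts pi.
Local Notation adj := (@sadj n G).
Local Notation adj' := (@sadj n G').

Lemma contracts_lift_avoidr (v' : 'I_(nv G')) a b : connect (avoidr adj' v') a b -> a != v' ->
  forall x y, pi x = a -> pi y = b ->
  connect [rel p q | [&& adj p q, pi p != v' & pi q != v']] x y.
Proof.
case: pi_contr => _ _ fibre_conn adj_image.
have in_fibre c : c != v' -> forall x y, pi x = c -> pi y = c ->
    connect [rel p q | [&& adj p q, pi p != v' & pi q != v']] x y.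
  move=> cv x y px py; apply: subrel_connect (fibre_conn c x y px py).
  by move=> s t /and3P [st /eqP ps /eqP pt]; rewrite /= st ps pt cv.
move/connectP => [p pth ->]; elim: p a pth => [|c p IH] a /=; first by move=> _; exact: in_fibre.
case/andP => /and3P [ac av' cv] pth _ x y px py.
have [_ [x0 [y0 [x0y0 px0 py0]]]] := (adj_image a c).1 ac.
apply: connect_trans (in_fibre a av' x x0 px px0) _.
apply: connect_trans (IH c pth cv y0 y py0 py).
by apply: connect1; rewrite /= x0y0 px0 py0 av' cv.
Qed.

Lemma contracts_project_avoidr (v' : 'I_(nv G')) x y :
  connect [rel p q | [&& adj p q, pi p != v' & pi q != v']] x y ->
  connect (avoidr adj' v') (pi x) (pi y).
Proof.
case: pi_contr => _ _ _ adj_image.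
apply: connect_image => p q /and3P [pq pv qv].
case: (eqVneq (pi p) (pi q)) => [e|ne]; [by left | right].
by rewrite /avoidr /= pv qv !andbT; apply/(adj_image _ _).2; split => //; exists p, q.
Qed.

End ContractionPaths.

Definition ZF n (F : {set {set 'I_n}}) : assignment n :=
  fun G => [set v | [exists A in F, one_branch v A]].

Lemma ZFP n F (G : stree n) (v : 'I_(nv G)) :
  v \in ZF F G <-> exists2 A, A \in F & one_branch v A.
Proof.
rewrite inE; split; first by case/existsP => A /andP [h1 h2]; exists A.
by case=> A h1 h2; apply/existsP; exists A; rewrite h1.
Qed.

Section ZFExtremal.
Variables (n : nat) (F : {set {set 'I_n}}).
Hypothesis F_meet : forall A B, A \in F -> B \in F -> A :&: B != set0.

Lemma ZF_proper (G : stree n) : 0 < n -> ZF F G != [set: 'I_(nv G)].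
Proof.
move=> n_gt0; apply/negP => /eqP ZG.
have Tconn (a b : 'I_(nv G)) : predT a -> predT b ->
    connect [rel x y | [&& @sadj n G x y, predT x & predT y]] a b.
  by move=> _ _; apply: subrel_connect (@sconn n G a b) => s t st; rewrite /= st.
have Twit (v : 'I_(nv G)) : predT v -> exists2 A, A \in F & one_branch v A.
  by move=> _; apply/(ZFP F v); rewrite ZG inE.
have [v [A [_ hA _ escapes]]] :=
  escaping_witness F_meet Tconn Twit (v0 := @sleaf n G (Ordinal n_gt0)) isT.
have [i hi] := intersecting_nonempty F_meet hA.
by have := escapes i _ hi (branch_id v _).
Qed.

Lemma ZF_preimage (G G' : stree n) (pi : 'I_(nv G) -> 'I_(nv G')) (v' : 'I_(nv G')) :
  contracts pi -> v' \in ZF F G' -> forall v, pi v = v' -> v \in ZF F G.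
Proof.
move=> pi_contr /ZFP [A hA /one_branchP [hs1 hs2]] v pv; apply/ZFP; exists A => //.
case: (pi_contr) => _ leaf_image _ _.
apply/one_branchP; split => [i hi|i j hi hj].
  by apply: contraNneq (hs1 i hi) => li; rewrite leaf_image li pv.
have := contracts_lift_avoidr pi_contr (hs2 i j hi hj) (hs1 i hi) (esym (leaf_image i))
  (esym (leaf_image j)).
apply: subrel_connect => p q /and3P [pq pp qp].
by rewrite /avoidr /= pq /=; apply/andP; split; [move: pp | move: qp];
  apply: contraNneq => ->; rewrite pv.
Qed.

Lemma ZF_image (G G' : stree n) (pi : 'I_(nv G) -> 'I_(nv G')) (v' : 'I_(nv G')) :
  contracts pi -> (forall v, pi v = v' -> v \in ZF F G) -> v' \in ZF F G'.
Proof.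
move=> pi_contr fibreZ; case: (pi_contr) => onto leaf_image fibre_conn _.
have [v0 pv0] := onto v'.
have [v [A [/eqP pv hA /one_branchP [_ hs2] escapes]]] :=
  @escaping_witness n G F F_meet [pred z | pi z == v']
   (fun a b (ha : pi a == v') (hb : pi b == v') => fibre_conn v' a b (eqP ha) (eqP hb))
   (fun v (hv : pi v == v') => (ZFP F v).1 (fibreZ v (eqP hv))) v0 (introT eqP pv0).
apply/ZFP; exists A => //; apply/one_branchP; split => [i hi|i j hi hj].
  by rewrite leaf_image; apply: (escapes i) => //; exact: branch_id.
rewrite !leaf_image; apply: contracts_project_avoidr => //.
have outside z : connect (avoidr (@sadj n G) v) (@sleaf n G i) z -> pi z != v'.
  by move=> iz; apply: (escapes i) => //; rewrite inE.
apply: subrel_connect (connect_restrict outside (hs2 i j hi hj)).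
by move=> p q /and3P [/and3P [pq _ _] pp qp]; rewrite /= pq pp qp.
Qed.

Lemma ZF_extremal : 0 < n -> extremal (ZF F).
Proof.
move=> n_gt0; split=> [G|G G' pi pi_contr v']; first exact: ZF_proper.
by split; [exact: ZF_preimage | exact: ZF_image].
Qed.

Lemma ZF_smooth : smooth (ZF F).
Proof.
move=> G v /ZFP [A hA /one_branchP [hs1 hs2]].
have [i hi] := intersecting_nonempty F_meet hA.
have [x [vx hix]] := branch_nbr (hs1 i hi).
have Ax j : j \in A -> @sleaf n G j \in branch v x.
  by move=> hj; move: hix; rewrite !inE => /connect_trans; apply; exact: hs2.
have leafA j : j \in A -> @sleaf n (tree2 (edge_side_ge2 vx) (edge_sideC_ge2 vx)) j = t0.
  by move=> hj; rewrite /= /tree2_leaf inE Ax.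
exists (tree2 (edge_side_ge2 vx) (edge_sideC_ge2 vx)), (edge_proj v x).
split => //; first exact: contracts_edge.
rewrite edge_proj_center //; apply/ZFP; exists A => //; apply/one_branchP.
by split=> [j hj|j k hj hk]; rewrite ?leafA // connect0.
Qed.

End ZFExtremal.

Lemma inCZ_ZF n (F : {set {set 'I_n}}) C :
  inCZ (ZF F) C -> exists2 A, A \in F & A \subset ~: C.
Proof.
case=> G [_ [w [/ZFP [A hA /one_branchP [hs1 _]] ->]]]; exists A => //.
by apply/subsetP => j hj; rewrite !inE (negbTE (hs1 j hj)).
Qed.

Lemma ZF_inCZ n (F : {set {set 'I_n}}) A (hA : A \in F)
    (A_ge2 : 2 <= #|A|) (AC_ge2 : 2 <= #|~: A|) :
  inCZ (ZF F) (~: A).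
Proof.
exists (tree2 A_ge2 AC_ge2); split => //; exists t1; split; last by rewrite /ell ell_tree2_1.
apply/ZFP; exists A => //.
have leafA j : j \in A -> @sleaf n (tree2 A_ge2 AC_ge2) j = t0 by rewrite /= /tree2_leaf => ->.
by apply/one_branchP; split=> [j hj|j k hj hk]; rewrite ?leafA // connect0.
Qed.

Lemma simple_intersecting_cards n (F : {set {set 'I_n}}) A :
  simple_intersecting F -> A \in F -> 2 <= #|A| /\ 2 <= #|~: A|.
Proof.
case=> sizes _ _ /sizes /andP [A_ge2 A_le]; split => //.
by have := cardsC A; rewrite card_ord; lia.
Qed.

Lemma hyp_ZF n (F : {set {set 'I_n}}) : simple_intersecting F ->
  forall A, hyp (ZF F) A <-> A \in F.
Proof.
move=> Fsi; have [_ antichain _] := Fsi; move=> A; split.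
  case=> B [[hB Bmax] ->]; have [A' hA' A'B] := inCZ_ZF hB.
  have [s1 s2] := simple_intersecting_cards Fsi hA'.
  have := Bmax _ (ZF_inCZ hA' s1 s2); rewrite subsetC => /(_ A'B) <-.
  by rewrite setCK.
move=> hA; have [s1 s2] := simple_intersecting_cards Fsi hA.
exists (~: A); split; last by rewrite setCK.
split=> [|C hC AC]; first exact: ZF_inCZ.
have [A' hA' A'C] := inCZ_ZF hC.
have CA : ~: C \subset A by rewrite -setCS setCK.
have eA : A' = A by apply: antichain => //; apply: subset_trans A'C CA.
by apply: setC_inj; rewrite setCK; apply/eqP; rewrite eqEsubset CA -eA A'C.
Qed.

Definition o0 : 'I_3 := @Ordinal 3 0 isT.
Definition o1 : 'I_3 := @Ordinal 3 1 isT.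
Definition o2 : 'I_3 := @Ordinal 3 2 isT.

Lemma ord3_cases (a : 'I_3) : [\/ a = o0, a = o1 | a = o2].
Proof.
case: a => [[|[|[|m]]] h]; [apply: Or31|apply: Or32|apply: Or33|by []]; exact: val_inj.
Qed.

(* The path [o0 -- o1 -- o2]. *)
Definition tree3_adj : rel 'I_3 := fun a b => ((a : nat) + b == 1) || ((a : nat) + b == 3).

Lemma tree3_adj_sym : symmetric tree3_adj.
Proof. by move=> a b; rewrite /tree3_adj addnC. Qed.

Lemma tree3_adj_irr : irreflexive tree3_adj.
Proof. by move=> a; case: (ord3_cases a) => ->. Qed.

Lemma tree3_conn (x y : 'I_3) : connect tree3_adj x y.
Proof.
have to_o1 a : connect tree3_adj a o1.
  by case: (ord3_cases a) => ->; [exact: connect1 | exact: connect0 | exact: connect1].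
by apply: connect_trans (to_o1 x) _; rewrite (sym_connect_sym tree3_adj_sym).
Qed.

(* Removing an edge isolates its endpoint [q] other than the middle vertex [o1]. *)
Lemma tree3_bridge (x y : 'I_3) : tree3_adj x y ->
  ~~ connect (fun a b => [&& tree3_adj a b, (a, b) != (x, y) & (a, b) != (y, x)]) x y.
Proof.
move=> xy; apply/negP => hc; set e := (fun a b => _) in hc.
pose q := if (x : nat) == 1 then y else x.
have q_isolated a b : e a b -> (a != q) && (b != q).
  rewrite /e /q /= !xpair_eqE; move: xy.
  by case: (ord3_cases a) => ->; case: (ord3_cases b) => ->; case: (ord3_cases x) => ->;
    case: (ord3_cases y) => ->.
have x_neq_y : x != y by apply: contraTneq xy => ->; rewrite tree3_adj_irr.
have : (x == q) || (y == q) by rewrite /q; case: ((x : nat) == 1); rewrite eqxx ?orbT.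
case/orP => /eqP qe.
  have stay a b : e a b -> a == q -> b == q.
    by move=> /q_isolated /andP [aq _] /eqP aq'; rewrite aq' eqxx in aq.
  have := connect_stable stay hc; rewrite -qe eqxx => /(_ isT) /eqP yx.
  by rewrite yx eqxx in x_neq_y.
have away a b : e a b -> a != q -> b != q by move=> /q_isolated /andP [].
by have := connect_stable away hc; rewrite -qe eqxx => /(_ x_neq_y).
Qed.

Section Tree3.
Variables (n : nat) (s : 'I_n -> 'I_3).
Hypotheses (s0 : 2 <= #|[set i | s i == o0]|) (s1 : 1 <= #|[set i | s i == o1]|)
  (s2 : 2 <= #|[set i | s i == o2]|).

Lemma tree3_deg (v : 'I_3) : 3 <= #|[set w | tree3_adj v w]| + #|[set i | s i == v]|.
Proof.
case: (ord3_cases v) => ->.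
- have -> : [set w | tree3_adj o0 w] = [set o1].
    by apply/setP => w; rewrite !inE; case: (ord3_cases w) => ->.
  by rewrite cards1.
- have -> : [set w | tree3_adj o1 w] = [set o0; o2].
    by apply/setP => w; rewrite !inE; case: (ord3_cases w) => ->.
  by rewrite cards2.
- have -> : [set w | tree3_adj o2 w] = [set o1].
    by apply/setP => w; rewrite !inE; case: (ord3_cases w) => ->.
  by rewrite cards1.
Qed.

Definition tree3 : stree n :=
  @STree n 3 tree3_adj s tree3_adj_sym tree3_adj_irr tree3_conn tree3_bridge tree3_deg.

Lemma contracts_tree3 (B : {set 'I_n}) (B_ge2 : 2 <= #|B|) (BC_ge2 : 2 <= #|~: B|)
    (p : 'I_3 -> 'I_2) :
  p o0 = t0 -> p o2 = t1 -> (forall i, tree2_leaf B i = p (s i)) ->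
  @contracts n tree3 (tree2 B_ge2 BC_ge2) p.
Proof.
move=> p0 p2 leaf_image; split => //.
- by move=> v'; case: (ord2_cases v') => ->; [exists o0 | exists o2].
- move=> v' a b pa pb; case: (eqVneq a b) => [->|ab]; first exact: connect0.
  apply: connect1; rewrite /= pa pb eqxx !andbT.
  have : p a = p b by rewrite pa pb.
  by move: ab; case: (ord3_cases a) => ->; case: (ord3_cases b) => ->; rewrite ?p0 ?p2.
- move=> a b; split; last by case.
  move=> ab; split => //.
  case: (ord2_cases a) => ea; case: (ord2_cases b) => eb; rewrite ea eb in ab *.
  + by rewrite /= tree2_adj_irr in ab.
  + by case: (ord2_cases (p o1)) => e1; [exists o1, o2 | exists o0, o1].
  + by case: (ord2_cases (p o1)) => e1; [exists o2, o1 | exists o1, o0].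
  + by rewrite /= tree2_adj_irr in ab.
Qed.

End Tree3.

Section NestedSplit.
Variables (n : nat) (B B' : {set 'I_n}).
Hypotheses (B'B : B' \proper B) (B'_ge2 : 2 <= #|B'|) (BC_ge2 : 2 <= #|~: B|).

Definition nested_leaf (i : 'I_n) : 'I_3 := if i \in B' then o0 else if i \in B then o1 else o2.

Lemma nested_leaf0 : 2 <= #|[set i | nested_leaf i == o0]|.
Proof.
suff -> : [set i | nested_leaf i == o0] = B' by [].
by apply/setP => i; rewrite !inE /nested_leaf; case: (i \in B'); case: (i \in B).
Qed.

Lemma nested_leaf1 : 1 <= #|[set i | nested_leaf i == o1]|.
Proof.
have /properP [_ [k kB kB']] := B'B.
by apply/card_gt0P; exists k; rewrite inE /nested_leaf (negbTE kB') kB.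
Qed.

Lemma nested_leaf2 : 2 <= #|[set i | nested_leaf i == o2]|.
Proof.
suff -> : [set i | nested_leaf i == o2] = ~: B by [].
apply/setP => i; rewrite !inE /nested_leaf.
by case: (boolP (i \in B')) => [/(subsetP (proper_sub B'B)) ->|_] //; case: (i \in B).
Qed.

Definition nested_tree : stree n := tree3 nested_leaf0 nested_leaf1 nested_leaf2.

Lemma nested_outer_ge2 : 2 <= #|B|.
Proof. exact: leq_trans B'_ge2 (subset_leq_card (proper_sub B'B)). Qed.

Lemma nested_innerC_ge2 : 2 <= #|~: B'|.
Proof. by apply: leq_trans BC_ge2 (subset_leq_card _); rewrite setCS proper_sub. Qed.

Lemma contracts_nested_outer : @contracts n nested_tree (tree2 nested_outer_ge2 BC_ge2)
  (fun z => if z == o2 then t1 else t0).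
Proof.
apply: contracts_tree3 => // i; rewrite /tree2_leaf /nested_leaf.
by case: (boolP (i \in B')) => [/(subsetP (proper_sub B'B)) -> //|_]; case: (i \in B).
Qed.

Lemma contracts_nested_inner : @contracts n nested_tree (tree2 B'_ge2 nested_innerC_ge2)
  (fun z => if z == o0 then t0 else t1).
Proof.
apply: contracts_tree3 => // i; rewrite /tree2_leaf /nested_leaf.
by case: (i \in B') => //; case: (i \in B).
Qed.

End NestedSplit.

Section TwoVertices.
Variables (n : nat) (G : stree n).
Hypothesis G2 : nv G = 2.
Local Notation V := ('I_(nv G)).
Local Notation adj := (@sadj n G).

Lemma card_nv2 : #|V| = 2.
Proof. by rewrite card_ord. Qed.

Lemma nv2_other (a b c : V) : a != b -> c != a -> c = b.
Proof.
move=> ab ca; apply/eqP; apply: contraT => cb.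
have : #|c |: [set a; b]| <= #|V| by apply: max_card.
by rewrite cardsU1 cards2 ab card_nv2 !inE negb_or ca cb.
Qed.

Lemma nv2_exists_other (a : V) : exists b : V, b != a.
Proof.
have : 0 < #|[set~ a]| by rewrite cardsC1 card_nv2.
by case/card_gt0P => b; rewrite !inE; exists b.
Qed.

Lemma nv2_adj (x y : V) : x != y -> adj x y.
Proof.
move=> xy; have yx : y != x by rewrite eq_sym.
have [u [xu _]] := connect_first_step (fun a b h => h) (@sconn n G x y) yx.
by rewrite -(nv2_other xy (_ : u != x)) // eq_sym adj_neq.
Qed.

Lemma nv2_ell_ge2 (x : V) : 2 <= #|ell x|.
Proof.
have nbrs : #|[set w | adj x w]| <= #|[set~ x]|.
  by apply: subset_leq_card; apply/subsetP => w; rewrite !inE eq_sym => /adj_neq.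
rewrite cardsC1 card_nv2 in nbrs.
by have := leq_trans (@sdeg n G x) (leq_add nbrs (leqnn _)); rewrite add1n ltnS.
Qed.

Lemma nv2_ellC (x y : V) : x != y -> ell y = ~: ell x.
Proof.
move=> xy; apply/setP => i; rewrite !inE.
case: (eqVneq (@sleaf n G i) x) => [->|lx]; first by rewrite (negbTE xy).
by rewrite (nv2_other xy lx) eqxx.
Qed.

End TwoVertices.

Lemma nv2_contracts n (G G' : stree n) (x : 'I_(nv G)) (x' : 'I_(nv G')) :
  nv G = 2 -> nv G' = 2 -> ell x = ell x' ->
  exists pi : 'I_(nv G) -> 'I_(nv G'), contracts pi /\ pi x = x'.
Proof.
move=> G2 G'2 ellx.
have [y yx] := nv2_exists_other G2 x; have [y' y'x'] := nv2_exists_other G'2 x'.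
have x'y' : x' != y' by rewrite eq_sym.
pose pi z := if z == x then x' else y'.
have pi_inj a b : pi a = pi b -> a = b.
  rewrite /pi; case: (eqVneq a x) => [->|ax]; case: (eqVneq b x) => [->|bx] //.
  - by move=> e; rewrite e eqxx in y'x'.
  - by move=> e; rewrite -e eqxx in y'x'.
  - by move=> _; rewrite (nv2_other G2 (_ : x != b) ax) // eq_sym.
have onto v' : exists v, pi v = v'.
  case: (eqVneq v' x') => [->|vx']; first by exists x; rewrite /pi eqxx.
  by exists y; rewrite /pi (negbTE yx) (nv2_other G'2 x'y' vx').
exists pi; split; last by rewrite /pi eqxx.
split.
- exact: onto.
- move=> i; rewrite /pi; case: ifP => [/eqP lx | /negbT lx].
    have : i \in ell x by rewrite inE lx.
    by rewrite ellx inE => /eqP.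
  have : i \notin ell x by rewrite inE.
  by rewrite ellx inE => l'x; apply: (nv2_other G'2 x'y').
- by move=> v' a b pa pb; rewrite (pi_inj a b) ?pa ?pb //; exact: connect0.
- move=> a b; split=> [ab|[ab _]]; last exact: nv2_adj.
  split; first exact: adj_neq.
  have [[a0 pa0] [b0 pb0]] := (onto a, onto b); exists a0, b0; split => //.
  apply: (nv2_adj G2); apply: contraTneq (adj_neq ab) => a0b0.
  by rewrite -pa0 -pb0 a0b0 eqxx.
Qed.

Lemma inCZ_cards n (Z : assignment n) (B : {set 'I_n}) :
  inCZ Z B -> 2 <= #|B| /\ 2 <= #|~: B|.
Proof.
case=> G [G2 [w [_ ->]]]; split; first exact: nv2_ell_ge2.
have [w' w'w] := nv2_exists_other G2 w.
by rewrite -(nv2_ellC G2 (_ : w != w')) ?nv2_ell_ge2 // eq_sym.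
Qed.

Lemma maxCZ_above n (Z : assignment n) (B : {set 'I_n}) :
  inCZ Z B -> exists B', maxCZ Z B' /\ B \subset B'.
Proof.
move: {2}#|~: B| (leqnn #|~: B|) => k; elim: k B => [|k IH] B Bk hB.
  exists B; split=> //; split=> // C _ BC.
  move: Bk; rewrite leqn0 cards_eq0 => /eqP /(congr1 (@setC _)); rewrite setCK setC0 => eB.
  by rewrite eB in BC *; apply/eqP; rewrite eqEsubset subsetT BC.
have [Bmax|] := classic (forall C, inCZ Z C -> B \subset C -> C = B); first by exists B.
move=> notmax; have [C [hC BC CB]] : exists C, [/\ inCZ Z C, B \subset C & C <> B].
  apply: NNPP => none; apply: notmax => C hC BC.
  by apply: NNPP => CB; apply: none; exists C.
have CB' : ~: C \proper ~: B.
  by rewrite properEneq setCS BC andbT; apply: contra_not_neq CB => /setC_inj.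
have [B' [B'max CB'']] := IH C (leq_trans (proper_card CB') Bk : _ <= k) hC.
by exists B'; split => //; apply: subset_trans BC CB''.
Qed.

Section ExtremalCZ.
Variables (n : nat) (Z : assignment n).
Hypothesis Zext : extremal Z.

Lemma inCZ_mem (G : stree n) (x : 'I_(nv G)) : nv G = 2 -> inCZ Z (ell x) -> x \in Z G.
Proof.
move=> G2 [G' [G'2 [w [hw ellw]]]].
have [pi [pi_contr px]] := nv2_contracts G2 G'2 ellw.
exact: (Zext.2 G G' pi pi_contr w).1 hw x px.
Qed.

Lemma notin_CZ_setC (B : {set 'I_n}) : inCZ Z B -> ~ inCZ Z (~: B).
Proof.
case=> G [G2 [w [hw ellw]]] hC.
have [w' w'w] := nv2_exists_other G2 w; have ww' : w != w' by rewrite eq_sym.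
have hw' : w' \in Z G by apply: inCZ_mem => //; rewrite (nv2_ellC G2 ww') -ellw.
apply: (negP (Zext.1 G)); rewrite eqEsubset subsetT /=; apply/subsetP => v _.
by case: (eqVneq v w) => [->|vw] //; rewrite (nv2_other G2 ww' vw).
Qed.

(* Membership passes from the split [B] up to the vertex [o0] of [nested_tree]
   and back down to the split [B'], through the two contractions collapsing the
   middle vertex of the path to either side. *)
Lemma inCZ_sub (B B' : {set 'I_n}) :
  inCZ Z B -> B' \subset B -> 2 <= #|B'| -> inCZ Z B'.
Proof.
move=> hB B'B B'_ge2; have [eB|neB] := eqVneq B' B; first by rewrite eB.
have [_ BC_ge2] := inCZ_cards hB.
have B'B_proper : B' \proper B by rewrite properEneq neB B'B.
pose T := nested_tree B'B_proper B'_ge2 BC_ge2.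
have B_mem : (t0 : 'I_(nv (tree2 (nested_outer_ge2 B'B_proper B'_ge2) BC_ge2))) \in
    Z (tree2 (nested_outer_ge2 B'B_proper B'_ge2) BC_ge2).
  by apply: inCZ_mem => //; rewrite /ell ell_tree2_0.
have o0_mem : (o0 : 'I_(nv T)) \in Z T :=
  (Zext.2 _ _ _ (contracts_nested_outer _ _ _) t0).1 B_mem o0 erefl.
exists (tree2 B'_ge2 (nested_innerC_ge2 B'B_proper BC_ge2)); split => //.
exists t0; split; last by rewrite /ell ell_tree2_0.
apply: (Zext.2 _ _ _ (contracts_nested_inner _ _ _) t0).2 => v.
by case: (eqVneq v o0) => [->|].
Qed.

Lemma hyp_simple_intersecting (F : {set {set 'I_n}}) :
  (forall A, A \in F <-> hyp Z A) -> simple_intersecting F.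
Proof.
move=> FZ; split.
- move=> A /FZ [B [[hB _] ->]]; have [B_ge2 BC_ge2] := inCZ_cards hB.
  by have := cardsC B; rewrite card_ord; lia.
- move=> A1 A2 /FZ [B1 [[hB1 _] ->]] /FZ [B2 [[_ B2max] ->]].
  by rewrite setCS => B2B1; rewrite (B2max B1 hB1).
- move=> A1 A2 /FZ [B1 [[hB1 _] ->]] /FZ [B2 [[hB2 _] ->]].
  apply/negP; rewrite setI_eq0 disjoints_subset setCK => B2B1.
  have [_ BC_ge2] := inCZ_cards hB1.
  exact: notin_CZ_setC hB1 (inCZ_sub hB2 B2B1 BC_ge2).
Qed.

End ExtremalCZ.

Lemma exists_finset_prop (T : finType) (P : T -> Prop) : exists S : {set T}, forall x, x \in S <-> P x.
Proof.
exists [set x | if excluded_middle_informative (P x) then true else false] => x.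
by rewrite inE; case: excluded_middle_informative.
Qed.

Lemma inCZ_sub_of_hyp n (Z1 Z2 : assignment n) : extremal Z2 ->
  (forall A, hyp Z1 A -> hyp Z2 A) -> forall B, inCZ Z1 B -> inCZ Z2 B.
Proof.
move=> Z2ext hyp12 B hB; have [B' [B'max BB']] := maxCZ_above hB.
have [B2 [[hB2 _] eB]] := hyp12 (~: B') (ex_intro _ B' (conj B'max erefl)).
rewrite -(setC_inj eB) in hB2.
by apply: (inCZ_sub Z2ext hB2 BB'); have [] := inCZ_cards hB.
Qed.

(* Smoothness reduces membership in [Z1 G] to two-vertex trees, where it is read
   off [C_Z]. *)
Lemma assignment_sub_of_hyp n (Z1 Z2 : assignment n) : smooth Z1 -> extremal Z2 ->
  (forall A, hyp Z1 A -> hyp Z2 A) -> forall G v, v \in Z1 G -> v \in Z2 G.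
Proof.
move=> Z1smooth Z2ext hyp12 G v hv; have [G' [pi [G'2 pi_contr hpv]]] := Z1smooth G v hv.
have hC : inCZ Z1 (ell (pi v)) by exists G'; split => //; exists (pi v).
have := inCZ_mem Z2ext G'2 (inCZ_sub_of_hyp Z2ext hyp12 hC).
by move/(Z2ext.2 G G' pi pi_contr (pi v)).1; apply.
Qed.

Theorem theorem7p9 (n : nat) (Hn : 3 <= n) :
  [/\ (* well defined: the image is a simple intersecting family *)
      (forall Z : assignment n, extremal Z -> smooth Z ->
         exists F : {set {set 'I_n}},
           (forall A, A \in F <-> hyp Z A) /\ simple_intersecting F),
      (* injective *)
      (forall Z1 Z2 : assignment n, extremal Z1 -> smooth Z1 ->
         extremal Z2 -> smooth Z2 ->
         (forall A, hyp Z1 A <-> hyp Z2 A) -> forall G, Z1 G = Z2 G) &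
      (* surjective *)
      (forall F : {set {set 'I_n}}, simple_intersecting F ->
         exists Z : assignment n,
           [/\ extremal Z, smooth Z & forall A, hyp Z A <-> A \in F])].
Proof.
split.
- move=> Z Zext _; have [F FZ] := exists_finset_prop (hyp Z).
  by exists F; split=> //; apply: (hyp_simple_intersecting Zext) => A; apply: FZ.
- move=> Z1 Z2 Z1ext Z1smooth Z2ext Z2smooth hyp12 G; apply/setP => v.
  by apply/idP/idP; apply: assignment_sub_of_hyp => // A /hyp12.
- move=> F Fsi; have [_ _ F_meet] := Fsi.
  exists (ZF F); split; [apply: ZF_extremal => //; lia | exact: ZF_smooth | exact: hyp_ZF].
Qed.
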